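(* There exist constants $C > 0$ and $\epsilon_0 \in (0, 1/2)$ such that for all $\epsilon \in (0, \epsilon_0)$ and all $u \in \mathrm{H}^{1/2}_w(\mathbb{R})$ one has $u \in \mathrm{H}^{1/2-\epsilon}(\mathbb{R})$ and $$\|u\|_{\mathrm{L}^2} + |u|_{\mathrm{H}^{1/2-\epsilon}} \leq C \epsilon^{-1/2}\left(\|u\|_{\mathrm{L}^2} + |u|_{\mathrm{H}^{1/2}_w}\right);$$ that is, the canonical injection $\mathrm{H}^{1/2}_w(\mathbb{R}) \to \mathrm{H}^{1/2-\epsilon}(\mathbb{R})$ has norm of order $\epsilon^{-1/2}$ for small $\epsilon$.
   Context: For $s \in ]0,1[$, the Slobodetski seminorm is $|u|_{\mathrm{H}^{s}}^2 = \iint_{\mathbb{R}^2} \frac{|u(x+y)-u(x)|^2}{|y|^{1+2s}}\,\mathrm{d}x\,\mathrm{d}y$, and $\mathrm{H}^s(\mathbb{R})$ is equipped with the norm $\|u\|_{\mathrm{L}^2} + |u|_{\mathrm{H}^s}$. The space $\mathrm{H}^{1/2}_w(\mathbb{R})$ consists of $u \in \mathrm{L}^2(\mathbb{R})$ for which there is $C \geq 0$ with $\|u - u(\cdot+y)\|_{\mathrm{L}^2} \leq C|y|^{1/2}$ for all $y \in \mathbb{R}$; the best such $C$ is denoted $|u|_{\mathrm{H}^{1/2}_w}$, and the norm is $\|u\|_{\mathrm{L}^2} + |u|_{\mathrm{H}^{1/2}_w}$. *)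

From HB Require Import structures.
From mathcomp Require Import all_boot all_order all_algebra.
From mathcomp Require Import all_classical all_reals all_analysis.
Set Implicit Arguments. Unset Strict Implicit. Unset Printing Implicit Defensive.
Import Order.TTheory GRing.Theory Num.Theory.
Import numFieldNormedType.Exports.
Local Open Scope classical_set_scope.
Local Open Scope ring_scope.

Section Sobolev.
Context {R : realType}.
Local Notation mu := (@lebesgue_measure R).

Definition L2norm (u : R -> R) : \bar R := Lnorm mu 2%:E (EFin \o u).

Definition Hs_semi (s : R) (u : R -> R) : \bar R :=
  poweR (\int[mu]_x \int[mu]_y
      (((u (x + y) - u x) ^+ 2) / (`|y| `^ (1 + 2 * s)))%:E) (2^-1).

Definition Hw_consts (u : R -> R) : set R :=
  [set C | 0 <= C /\ forall y : R,
      lee (L2norm (fun x => u x - u (x + y))) (C * `|y| `^ (2^-1))%:E].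

Definition Hw_semi (u : R -> R) : R := inf (Hw_consts u).

Definition in_L2 (u : R -> R) : Prop :=
  measurable_fun setT u /\ (L2norm u < +oo)%E.

Definition in_Hw (u : R -> R) : Prop := in_L2 u /\ Hw_consts u !=set0.

Definition in_Hs (s : R) (u : R -> R) : Prop :=
  in_L2 u /\ (Hs_semi s u < +oo)%E.
End Sobolev.

From HB Require Import structures.
From mathcomp Require Import all_boot all_order all_algebra.
From mathcomp Require Import all_classical all_reals all_analysis.
From mathcomp Require Import measurable_realfun ring lra.
Set Implicit Arguments. Unset Strict Implicit. Unset Printing Implicit Defensive.
Import Order.TTheory GRing.Theory Num.Theory.
Import numFieldNormedType.Exports.
Local Open Scope classical_set_scope.
Local Open Scope ring_scope.

(* Write s = 1/2 - eps, so that the H^s kernel is |y|^(2 eps - 2). By Tonelli,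
   |u|_{H^s}^2 = \int_y |y|^(2 eps - 2) D(y) dy with D(y) = \int_x |u(x+y) - u(x)|^2.
   For |y| <= 1 the H^{1/2}_w bound gives D(y) <= W^2 |y|, and the weighted
   integral of W^2 |y| over [-1, 1] is W^2 / eps; for |y| >= 1 the trivial bound
   D(y) <= 4 |u|_{L^2}^2 is integrable against |y|^(2 eps - 2), with integral at
   most 16 |u|_{L^2}^2 once eps <= 1/4. Hence |u|_{H^s} <= eps^(-1/2) W + 4 |u|_{L^2}
   for every admissible W, and taking the infimum over W gives C = 5, eps0 = 1/4. *)

Section powR_integrals.
Context {R : realType}.
Local Notation mu := (@lebesgue_measure R).

Lemma ge0_integral_bigcup_nondecreasing_le (F : (set R)^nat) (f : R -> \bar R)
    (B : \bar R) :
  {homo F : n m / (n <= m)%N >-> (n <= m)%O} ->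
  (forall i, measurable (F i)) ->
  measurable_fun (\bigcup_i F i) f ->
  (forall x, (\bigcup_i F i) x -> (0 <= f x)%E) ->
  (forall i, (\int[mu]_(x in F i) f x <= B)%E) ->
  (\int[mu]_(x in \bigcup_i F i) f x <= B)%E.
Proof.
move=> ndF mF mf f0 FB.
have cvgF : (\int[mu]_(x in F i) f x)%E @[i --> \oo] -->
    (\int[mu]_(x in \bigcup_i F i) f x)%E.
  apply: ge0_nondecreasing_set_cvg_integral => //.
    move=> i; apply: measurable_funS mf; first exact: bigcup_measurable.
    exact: bigcup_sup.
  by move=> i x Fx; apply: f0; exists i.
rewrite -(cvg_lim _ cvgF)//.
apply: lime_le; first by apply/cvg_ex; exists (\int[mu]_(x in \bigcup_i F i) f x)%E.
exact: nearW.
Qed.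

Lemma integral_itv_powR (p c d : R) : 0 < c -> c < d -> p + 1 != 0 ->
  (\int[mu]_(x in `[c, d]) (x `^ p)%:E =
  ((d `^ (p + 1) - c `^ (p + 1)) / (p + 1))%:E)%E.
Proof.
move=> c0 cd p1.
pose F x := (p + 1)^-1 * x `^ (p + 1).
have dF (x : R) : 0 < x -> is_derive x 1 F (x `^ p).
  move=> x0; have -> : x `^ p = (p + 1)^-1 *: ((p + 1) * x `^ (p + 1 - 1)).
    by rewrite addrK [RHS]mulrA mulVf// mul1r.
  exact/is_deriveZ/is_derive1_powR.
have cpow (x : R) : 0 < x -> {for x, continuous (fun x : R => x `^ p)}.
  move=> x0; apply/differentiable_continuous/derivable1_diffP.
  by apply: derivable_powR; rewrite in_itv/= andbT.
have cF (x : R) : 0 < x -> {for x, continuous F}.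
  by move=> x0; apply/differentiable_continuous/derivable1_diffP; case: (dF x x0).
rewrite (@continuous_FTC2 _ _ F)//.
- by rewrite -EFinB /F -mulrBr mulrC.
- apply: continuous_in_subspaceT => x; rewrite inE/= in_itv/= => /andP[cx _].
  exact: cpow (lt_le_trans c0 cx).
- split.
  + by move=> x; rewrite in_itv/= => /andP[cx _]; case: (dF x (lt_trans c0 cx)).
  + exact/cvg_at_right_filter/cF.
  + exact/cvg_at_left_filter/cF/(lt_trans c0 cd).
- move=> x; rewrite in_itv/= => /andP[cx _].
  by rewrite derive1E; case: (dF x (lt_trans c0 cx)) => _ ->.
Qed.

Definition powR_near0 (a y : R) := if (0 < y) && (y <= 1) then y `^ a else 0.

Definition powR_tail (b y : R) := if 1 <= y then y `^ b else 0.

Lemma measurable_powR_near0 a : measurable_fun setT (powR_near0 a).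
Proof.
apply: measurable_fun_ifT; last 2 first.
- exact: measurable_powR.
- exact: measurable_cst.
apply: measurable_and.
  by apply: measurable_fun_ltr => //; exact: measurable_cst.
by apply: measurable_fun_ler => //; exact: measurable_cst.
Qed.

Lemma measurable_powR_tail b : measurable_fun setT (powR_tail b).
Proof.
apply: measurable_fun_ifT; last 2 first.
- exact: measurable_powR.
- exact: measurable_cst.
by apply: measurable_fun_ler => //; exact: measurable_cst.
Qed.

Lemma powR_near0_ge0 a y : 0 <= powR_near0 a y.
Proof. by rewrite /powR_near0; case: ifP => // _; exact: powR_ge0. Qed.

Lemma powR_tail_ge0 b y : 0 <= powR_tail b y.
Proof. by rewrite /powR_tail; case: ifP => // _; exact: powR_ge0. Qed.

Lemma integral_powR_near0_le (a : R) : 0 < a + 1 ->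
  (\int[mu]_x (powR_near0 a x)%:E <= ((a + 1)^-1)%:E)%E.
Proof.
move=> a1.
have -> : (\int[mu]_x (powR_near0 a x)%:E = \int[mu]_(x in `]0%R, 1%R]) (x `^ a)%:E)%E.
  rewrite [RHS]integral_mkcond; apply: eq_integral => x _.
  by rewrite /patch /powR_near0 mem_setE in_itv/=; case: ifP.
have -> : `]0, 1]%classic = \bigcup_n `[(n.+2%:R)^-1, 1]%classic :> set R.
  apply/seteqP; split => x /=.
    rewrite in_itv/= => /andP[x0 x1]; exists (Num.Def.trunc x^-1) => //=.
    rewrite in_itv/= x1 andbT -[x in (_ <= x)]invrK lef_pV2 ?posrE ?invr_gt0//.
    by apply/ltW/(lt_le_trans (truncnS_gt _)); rewrite ler_nat.
  move=> [n _] /=; rewrite !in_itv/= => /andP[cx ->]; rewrite andbT.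
  by apply: lt_le_trans cx; rewrite invr_gt0.
apply: ge0_integral_bigcup_nondecreasing_le.
- move=> n m nm; rewrite subsetEset => x/=; rewrite !in_itv/= => /andP[cx ->].
  by rewrite andbT; apply: le_trans cx; rewrite lef_pV2 ?posrE// ler_nat ltnS.
- by move=> i; exact: measurable_itv.
- by apply/measurable_EFinP; apply: measurable_funTS; exact: measurable_powR.
- by move=> x _; rewrite lee_fin powR_ge0.
- move=> n; rewrite integral_itv_powR ?gt_eqF ?invf_lt1 ?ltr1n//.
  by rewrite lee_fin powR1 -[leRHS]mul1r ler_wpM2r ?invr_ge0 ?ltW// gerBl powR_ge0.
Qed.

Lemma integral_powR_tail_le (b : R) : b + 1 < 0 ->
  (\int[mu]_x (powR_tail b x)%:E <= ((- (b + 1))^-1)%:E)%E.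
Proof.
move=> b1.
have -> : (\int[mu]_x (powR_tail b x)%:E = \int[mu]_(x in `[1%R, +oo[) (x `^ b)%:E)%E.
  rewrite [RHS]integral_mkcond; apply: eq_integral => x _.
  by rewrite /patch /powR_tail mem_setE in_itv/= andbT; case: ifP.
have -> : `[1, +oo[%classic = \bigcup_n `[1, n.+2%:R]%classic :> set R.
  apply/seteqP; split => x /=.
    rewrite in_itv/= andbT => x1; exists (Num.Def.trunc x) => //=.
    rewrite in_itv/= x1/=.
    by apply/ltW/(lt_le_trans (truncnS_gt _)); rewrite ler_nat.
  by move=> [n _] /=; rewrite !in_itv/= => /andP[-> _].
apply: ge0_integral_bigcup_nondecreasing_le.
- move=> n m nm; rewrite subsetEset => x/=; rewrite !in_itv/= => /andP[-> cx].
  by apply: le_trans cx _; rewrite ler_nat ltnS.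
- by move=> i; exact: measurable_itv.
- by apply/measurable_EFinP; apply: measurable_funTS; exact: measurable_powR.
- by move=> x _; rewrite lee_fin powR_ge0.
- move=> n; rewrite integral_itv_powR ?lt_eqF ?ltr1n//.
  rewrite lee_fin powR1 -mulrNN opprB -invrN -[leRHS]mul1r.
  by rewrite ler_wpM2r ?invr_ge0 ?oppr_ge0 ?ltW// gerBl powR_ge0.
Qed.

End powR_integrals.

Section lebesgue_invariance.
Context {R : realType}.
Local Notation mu := (@lebesgue_measure R).

Lemma measurable_addr (y : R) : measurable_fun [set: R] (fun x : R => x + y).
Proof. by apply: measurable_funD => //; exact: measurable_cst. Qed.

Lemma lebesgue_measure_shift (y : R) (A : set R) : measurable A ->
  (pushforward mu (fun x : R => (x + y)%R : measurableTypeR R) A = mu A)%E.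
Proof.
move=> mA; have mf := measurable_addr y.
apply/esym/(@lebesgue_measure_unique _
  (pushforward mu (fun x : R => (x + y)%R : measurableTypeR R))) => //= _ [[a b]] _ <-.
rewrite /pushforward (_ : _ @^-1` _ = [set` `]a - y, b - y]]); last first.
  by apply/seteqP; split => x /=; rewrite !in_itv/= ltrBlDr lerBrDr.
rewrite !lebesgue_measure_itv/= !lte_fin ltrD2r.
by case: ifP => // _; rewrite -!EFinD opprB addrA subrK.
Qed.

Lemma ge0_integral_invariant (phi : R -> R) (f : R -> \bar R) :
  measurable_fun [set: R] phi ->
  (forall A, measurable A -> pushforward mu (phi : R -> measurableTypeR R) A = mu A) ->
  measurable_fun [set: R] f -> (forall x, (0 <= f x)%E) ->
  (\int[mu]_x f (phi x) = \int[mu]_x f x)%E.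
Proof.
move=> mphi phi_mu mf f0.
have -> : (\int[mu]_x f x =
    \int[pushforward mu (phi : R -> measurableTypeR R)]_x f x)%E.
  by apply: eq_measure_integral => A mA _; exact: esym (phi_mu A mA).
by rewrite ge0_integral_pushforward.
Qed.

Lemma ge0_integral_shift (y : R) (f : R -> \bar R) :
  measurable_fun [set: R] f -> (forall x, (0 <= f x)%E) ->
  (\int[mu]_x f (x + y)%R = \int[mu]_x f x)%E.
Proof.
exact/(ge0_integral_invariant (measurable_addr y))/lebesgue_measure_shift.
Qed.

Lemma ge0_integral_opp (f : R -> \bar R) :
  measurable_fun [set: R] f -> (forall x, (0 <= f x)%E) ->
  (\int[mu]_x f (- x)%R = \int[mu]_x f x)%E.
Proof. exact/(ge0_integral_invariant (@oppr_measurable _ setT))/lebesgue_measureN. Qed.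

End lebesgue_invariance.

Section L2norm.
Context {R : realType}.
Local Notation mu := (@lebesgue_measure R).

Lemma L2normE (f : R -> R) :
  L2norm f = poweR (\int[mu]_x ((f x) ^+ 2)%:E)%E 2^-1.
Proof.
rewrite /L2norm unlock /Lnorm; congr poweR; apply: eq_integral => x _ /=.
by rewrite powR_mulrn// real_normK// num_real.
Qed.

Lemma poweR12_le_sqr (Q : \bar R) (c : R) : 0 <= c -> (0 <= Q)%E ->
  (poweR Q 2^-1 <= c%:E)%E = (Q <= (c ^+ 2)%:E)%E.
Proof.
move=> c0; case: Q => [q| |] //= q0.
  rewrite lee_fin in q0; rewrite !lee_fin powR12_sqrt//.
  by rewrite -[X in (_ <= X) = _](ger0_norm c0) -sqrtr_sqr ler_sqrt// sqr_ge0.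
by rewrite invr_eq0 pnatr_eq0 /= !leye_eq.
Qed.

Lemma in_L2_sqr_integral (u : R -> R) : in_L2 u ->
  exists2 N, 0 <= N & L2norm u = N%:E /\ (\int[mu]_x ((u x) ^+ 2)%:E = (N ^+ 2)%:E)%E.
Proof.
move=> [_ uL2]; set J := (\int[mu]_x ((u x) ^+ 2)%:E)%E.
have J0 : (0 <= J)%E by apply: integral_ge0 => x _; rewrite lee_fin sqr_ge0.
have Jfin : J \is a fin_num.
  rewrite ge0_fin_numE//; apply: (@lty_poweRy _ _ 2^-1); first by rewrite invr_eq0.
  by rewrite -L2normE.
have JE : J = (fine J)%:E by rewrite fineK.
have fJ0 : 0 <= fine J by rewrite -lee_fin -JE.
exists (Num.sqrt (fine J)); first exact: sqrtr_ge0.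
by rewrite sqr_sqrtr// L2normE -/J JE poweR_EFin powR12_sqrt.
Qed.

End L2norm.

Section increments.
Context {R : realType}.
Local Notation mu := (@lebesgue_measure R).
Variable u : R -> R.

Lemma integral_sqr_increment_le_Hw (W y : R) : Hw_consts u W ->
  (\int[mu]_x ((u (x + y) - u x) ^+ 2)%:E <= (W ^+ 2 * `|y|)%:E)%E.
Proof.
move=> [W0 /(_ y)]; rewrite L2normE poweR12_le_sqr; last 2 first.
- exact/mulr_ge0/powR_ge0.
- by apply: integral_ge0 => x _; rewrite lee_fin sqr_ge0.
rewrite exprMn powR12_sqrt// sqr_sqrtr//.
by under eq_integral do rewrite -sqrrN opprB.
Qed.

Hypothesis mu_ : measurable_fun setT u.

Lemma integral_sqr_increment_le_L2 (I y : R) :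
  (\int[mu]_x ((u x) ^+ 2)%:E = I%:E)%E ->
  (\int[mu]_x ((u (x + y) - u x) ^+ 2)%:E <= (4 * I)%:E)%E.
Proof.
move=> uI.
have mu2 : measurable_fun setT (fun x : R => ((u x) ^+ 2)%:E).
  by apply/measurable_EFinP; exact: measurable_funX.
have mu2y : measurable_fun setT (fun x : R => ((u (x + y)) ^+ 2)%:E).
  apply/measurable_EFinP/measurable_funX.
  exact: measurableT_comp mu_ (measurable_addr y).
apply: (@le_trans _ _
    (\int[mu]_x (2%:E * ((u (x + y)) ^+ 2)%:E + 2%:E * ((u x) ^+ 2)%:E))%E).
  apply: ge0_le_integral => //.
  - by move=> x _; rewrite lee_fin sqr_ge0.
  - apply/measurable_EFinP/measurable_funX; apply: measurable_funB => //.
    exact: measurableT_comp mu_ (measurable_addr y).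
  - by apply: emeasurable_funD; exact: emeasurable_funM.
  - move=> x _; rewrite -!EFinM -EFinD lee_fin.
    by have := sqr_ge0 (u (x + y) + u x); rewrite sqrrD sqrrB; lra.
rewrite ge0_integralD//; last 4 first.
- by move=> x _; rewrite mule_ge0// lee_fin sqr_ge0.
- exact: emeasurable_funM.
- by move=> x _; rewrite mule_ge0// lee_fin sqr_ge0.
- exact: emeasurable_funM.
rewrite !ge0_integralZl_EFin//; try by move=> x _; rewrite lee_fin sqr_ge0.
rewrite (ge0_integral_shift y (f := fun x : R => ((u x) ^+ 2)%:E))//; last first.
  by move=> x; rewrite lee_fin sqr_ge0.
by rewrite uI -EFinM -EFinD lee_fin; lra.
Qed.

End increments.

Section Hs_estimate.
Context {R : realType}.
Local Notation mu := (@lebesgue_measure R).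
Variables (u : R -> R) (N W eps : R).
Hypotheses (mu_ : measurable_fun setT u) (N0 : 0 <= N)
  (uN : (\int[mu]_x ((u x) ^+ 2)%:E = (N ^+ 2)%:E)%E)
  (eps_gt0 : 0 < eps) (eps_le4 : eps <= 4^-1) (HW : Hw_consts u W).

Definition increment_bound (t : R) :=
  W ^+ 2 * powR_near0 (2 * eps - 1) t + 4 * N ^+ 2 * powR_tail (2 * eps - 2) t.

Lemma measurable_increment_bound : measurable_fun setT increment_bound.
Proof.
by apply: measurable_funD; apply: measurable_funM;
  first [exact: measurable_powR_near0|exact: measurable_powR_tail|exact: measurable_cst].
Qed.

Lemma increment_bound_ge0 t : 0 <= increment_bound t.
Proof.
by rewrite addr_ge0// mulr_ge0 ?sqr_ge0 ?powR_near0_ge0 ?powR_tail_ge0 ?mulr_ge0.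
Qed.

Lemma integral_weighted_increment_le y :
  (\int[mu]_x ((u (x + y) - u x) ^+ 2 * `|y| `^ (2 * eps - 2))%:E
    <= (increment_bound `|y|)%:E)%E.
Proof.
(* [lra] does not use section hypotheses, hence the explicit [move:]. *)
have p0 : 2 * eps - 2 != 0 by rewrite lt_eqF//; move: eps_gt0 eps_le4; lra.
have mD : measurable_fun setT (fun x : R => ((u (x + y) - u x) ^+ 2)%:E).
  apply/measurable_EFinP/measurable_funX; apply: measurable_funB => //.
  exact: measurableT_comp mu_ (measurable_addr y).
have k0 : (0 <= (`|y| `^ (2 * eps - 2))%:E)%E by rewrite lee_fin powR_ge0.
rewrite (_ : \int[mu]_x _ = (\int[mu]_x ((u (x + y) - u x) ^+ 2)%:E)
    * (`|y| `^ (2 * eps - 2))%:E)%E; last first.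
  under eq_integral do rewrite EFinM.
  by rewrite ge0_integralZr// => x _; rewrite lee_fin sqr_ge0.
have [->|y0] := eqVneq y 0.
  by rewrite normr0 powR0// mule0 lee_fin increment_bound_ge0.
have ay0 : 0 < `|y| by rewrite normr_gt0.
case: (leP `|y| 1) => y1.
  apply: le_trans (lee_wpmul2r k0 (integral_sqr_increment_le_Hw y HW)) _.
  rewrite -EFinM lee_fin /increment_bound /powR_near0 ay0 y1 /=.
  rewrite (_ : 2 * eps - 1 = 1 + (2 * eps - 2)); last by ring.
  rewrite (@powRD _ _ 1); last by rewrite normr_eq0 y0 implybT.
  by rewrite powRr1// mulrA lerDl mulr_ge0 ?powR_tail_ge0// mulr_ge0 ?sqr_ge0.
apply: le_trans (lee_wpmul2r k0 (integral_sqr_increment_le_L2 mu_ y uN)) _.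
rewrite -EFinM lee_fin /increment_bound /powR_tail (ltW y1) /=.
by rewrite lerDr mulr_ge0 ?sqr_ge0 ?powR_near0_ge0.
Qed.

Lemma integral_increment_bound_le :
  (\int[mu]_t (increment_bound t)%:E <= (W ^+ 2 / (2 * eps) + 8 * N ^+ 2)%:E)%E.
Proof.
move: eps_gt0 eps_le4 => e0 e4.
have J1 : (\int[mu]_t (powR_near0 (2 * eps - 1) t)%:E <= ((2 * eps)^-1)%:E)%E.
  by have := @integral_powR_near0_le R (2 * eps - 1); rewrite subrK; apply; lra.
have J2 : (\int[mu]_t (powR_tail (2 * eps - 2) t)%:E <= 2%:E)%E.
  apply: le_trans (integral_powR_tail_le _) _; first lra.
  rewrite lee_fin -[leRHS]invrK lef_pV2 ?posrE ?invr_gt0//; lra.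
have m1 : measurable_fun setT (fun t => (powR_near0 (2 * eps - 1) t)%:E).
  by apply/measurable_EFinP; exact: measurable_powR_near0.
have m2 : measurable_fun setT (fun t => (powR_tail (2 * eps - 2) t)%:E).
  by apply/measurable_EFinP; exact: measurable_powR_tail.
under eq_integral do rewrite /increment_bound EFinD !EFinM.
rewrite ge0_integralD//; last 4 first.
- by move=> t _; rewrite -EFinM lee_fin mulr_ge0 ?sqr_ge0 ?powR_near0_ge0.
- exact: emeasurable_funM.
- by move=> t _; rewrite -EFinM lee_fin mulr_ge0 ?powR_tail_ge0 ?mulr_ge0 ?sqr_ge0.
- exact: emeasurable_funM.
rewrite !ge0_integralZl_EFin//; last 4 first.
- by move=> t _; rewrite lee_fin powR_tail_ge0.
- by rewrite mulr_ge0 ?sqr_ge0.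
- by move=> t _; rewrite lee_fin powR_near0_ge0.
- by rewrite sqr_ge0.
apply: le_trans (leeD (lee_wpmul2l _ J1) (lee_wpmul2l _ J2)) _.
- by rewrite lee_fin sqr_ge0.
- by rewrite lee_fin mulr_ge0 ?sqr_ge0.
by rewrite -!EFinM -EFinD lee_fin; lra.
Qed.

Lemma measurable_increment_boundN : measurable_fun setT (fun t : R => increment_bound (- t)).
Proof. exact: measurableT_comp measurable_increment_bound (@oppr_measurable _ setT). Qed.

(* [increment_bound] vanishes on ]-oo, 0], so it controls both halves of the
   even function [increment_bound `|y|]. *)
Lemma integral_increment_bound_even_le :
  (\int[mu]_y (increment_bound y + increment_bound (- y))%:E
    <= (W ^+ 2 / eps + 16 * N ^+ 2)%:E)%E.
Proof.
have mB := measurable_increment_bound; have mBN := measurable_increment_boundN.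
have B0 t : (0 <= (increment_bound t)%:E)%E by rewrite lee_fin increment_bound_ge0.
under eq_integral do rewrite EFinD.
rewrite ge0_integralD//; try exact/measurable_EFinP.
rewrite (ge0_integral_opp (f := fun t => (increment_bound t)%:E))//;
  last exact/measurable_EFinP.
apply: le_trans (leeD integral_increment_bound_le integral_increment_bound_le) _.
rewrite -EFinD lee_fin.
have : W ^+ 2 / (2 * eps) + W ^+ 2 / (2 * eps) = W ^+ 2 / eps.
  by field; rewrite gt_eqF.
lra.
Qed.

Lemma Hs_integral_le :
  (\int[mu]_x \int[mu]_y
      (((u (x + y) - u x) ^+ 2) / (`|y| `^ (1 + 2 * (2^-1 - eps))))%:E
    <= (W ^+ 2 / eps + 16 * N ^+ 2)%:E)%E.
Proof.
pose g p := ((u (p.1 + p.2) - u p.1) ^+ 2 * `|p.2| `^ (2 * eps - 2))%:E.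
have -> : (\int[mu]_x \int[mu]_y
      (((u (x + y) - u x) ^+ 2) / (`|y| `^ (1 + 2 * (2^-1 - eps))))%:E =
    \int[mu]_x \int[mu]_y g (x, y))%E.
  have rE : 2 * eps - 2 = - (1 + 2 * (2^-1 - eps)) by lra.
  apply: eq_integral => x _; apply: eq_integral => y _.
  by rewrite /g /= rE powRN.
have mg : measurable_fun setT g.
  apply/measurable_EFinP; apply: measurable_funM.
    apply: measurable_funX; apply: measurable_funB.
      exact: measurableT_comp mu_ (measurable_funD measurable_fst measurable_snd).
    exact: measurableT_comp mu_ measurable_fst.
  have mpow : measurable_fun setT (fun y : R => `|y| `^ (2 * eps - 2)).
    exact: measurableT_comp (measurable_powR _) (@normr_measurable _ setT).
  exact: measurableT_comp mpow measurable_snd.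
have g0 p : (0 <= g p)%E by rewrite lee_fin mulr_ge0 ?sqr_ge0 ?powR_ge0.
rewrite (@fubini_tonelli _ _ _ _ _ mu mu g mg g0) /=.
apply: le_trans integral_increment_bound_even_le.
apply: ge0_le_integral => //.
- by move=> y _; apply: integral_ge0 => x _; exact: g0.
- exact: (@measurable_fun_fubini_tonelli_G _ _ _ _ _ mu g mg g0).
- apply/measurable_EFinP/measurable_funD; first exact: measurable_increment_bound.
  exact: measurable_increment_boundN.
- move=> y _; apply: le_trans (integral_weighted_increment_le y) _.
  rewrite lee_fin; case: (leP 0 y) => y0.
    by rewrite ger0_norm// lerDl increment_bound_ge0.
  by rewrite ltr0_norm// lerDr increment_bound_ge0.
Qed.

Lemma Hs_semi_le :
  (Hs_semi (2^-1 - eps) u <= (W * eps `^ (- 2^-1) + 4 * N)%:E)%E.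
Proof.
have [W0 _] := HW; set e := eps `^ (- 2^-1).
have e0 : 0 <= e by exact: powR_ge0.
have e2 : e ^+ 2 = eps^-1.
  by rewrite /e powRN exprVn powR12_sqrt ?sqr_sqrtr// ltW.
rewrite /Hs_semi poweR12_le_sqr; last 2 first.
- by rewrite addr_ge0// mulr_ge0.
- apply: integral_ge0 => x _; apply: integral_ge0 => y _.
  by rewrite lee_fin mulr_ge0 ?sqr_ge0// invr_ge0 powR_ge0.
apply: le_trans Hs_integral_le _; rewrite lee_fin -[eps]invrK -e2.
have : 0 <= W * e * N by rewrite !mulr_ge0.
nra.
Qed.

End Hs_estimate.

Theorem proposition4 (R : realType) :
  exists (C eps0 : R), 0 < C /\ 0 < eps0 < 2^-1 /\
  forall (eps : R), 0 < eps < eps0 ->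
  forall (u : R -> R), in_Hw u ->
    in_Hs (2^-1 - eps) u /\
    (L2norm u + Hs_semi (2^-1 - eps) u
       <= (C * eps `^ (- 2^-1))%:E * (L2norm u + (Hw_semi u)%:E))%E.
Proof.
exists 5, 4^-1; split=> //; split; first by rewrite invr_gt0 /=; lra.
move=> eps /andP[eps0 eps4] u [uL2 [W1 HW1]].
have [N N0 [L2N uN]] := in_L2_sqr_integral uL2.
have Hs_le := Hs_semi_le uL2.1 N0 uN eps0 (ltW eps4).
set e := eps `^ (- 2^-1) in Hs_le *.
have e1 : 1 <= e by rewrite -(powRr0 eps) ger_powR// eps0 /=; lra.
have Hs_fin : Hs_semi (2^-1 - eps) u \is a fin_num.
  rewrite ge0_fin_numE ?poweR_ge0//.
  exact: le_lt_trans (Hs_le _ HW1) (ltry _).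
set h := fine (Hs_semi (2^-1 - eps) u).
have hE : Hs_semi (2^-1 - eps) u = h%:E by rewrite fineK.
split; first by split=> //; rewrite hE ltry.
have Hw0 : 0 <= Hw_semi u by apply: lb_le_inf => [|W []]; first by exists W1.
have hHw : h - 4 * N <= Hw_semi u * e.
  rewrite -ler_pdivrMr ?(lt_le_trans ltr01)//; apply: lb_le_inf; first by exists W1.
  move=> W /Hs_le; rewrite hE lee_fin => hW.
  by rewrite ler_pdivrMr ?(lt_le_trans ltr01)//; lra.
rewrite L2N hE -EFinD -EFinM lee_fin; nra.
Qed.
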